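(* Let $\alpha$ be a graph function on a strongly connected digraph $G$ and $v$ a vertex with $\rho^R_v>0$. Then there exist edges $(u,v)$ and $(v,w)$ of $G$ such that $y_v+\frac{\rho^R_v}{2}\le\frac{y_u+y_w}{2}$.
   Context: $G$ is a strongly connected directed graph (self-loops allowed); a graph function assigns a real weight $\alpha_{uv}$ to each edge. $\alpha_v^{\text{in}}=\max_{u:(u,v)\in G}\alpha_{uv}$, $\alpha_v^{\text{out}}=\max_{w:(v,w)\in G}\alpha_{vw}$, $\rho^R_v=\max\{0,\alpha_v^{\text{out}}-\alpha_v^{\text{in}}\}$. A raising operation at $v$: if $\rho^R_v>0$ add $\rho^R_v/2$ to each incoming edge weight $\alpha_{uv}$ ($u\ne v$) and subtract it from each outgoing $\alpha_{vw}$ ($w\neq v$); otherwise do nothing. Starting from $\alpha$, for any infinite sequence of raising operations in which every vertex occurs infinitely often, the cumulative amount $r_v(t)$ by which each vertex has been raised converges to a limit vector $r^*$ independent of the sequence. The heights are $y_v=-r^*_v$. *)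

From HB Require Import structures.
From mathcomp Require Import all_boot all_order all_algebra.
From mathcomp Require Import all_classical all_reals all_analysis.
Set Implicit Arguments. Unset Strict Implicit. Unset Printing Implicit Defensive.
Import Order.TTheory GRing.Theory Num.Theory.
Local Open Scope ring_scope.

(* A digraph on a finite vertex type V is an edge relation e : rel V
   (self-loops allowed).  Strong connectivity: every vertex reaches every
   vertex along directed edges. *)
Definition strongly_connected (V : finType) (e : rel V) : Prop :=
  forall x y : V, connect e x y.

Section GraphFun.
Variables (R : realType) (V : finType) (e : rel V).

(* alpha_v^in = max_{u : (u,v) in G} alpha_{uv}
   (0 by convention if v has no in-edge, which in a strongly connected graph
   only happens for the single loopless vertex). *)
Definition alpha_in (a : V -> V -> R) (v : V) : R :=
  if [pick u | e u v] is Some u0 then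
    \big[Num.max/a u0 v]_(u | e u v) a u v
  else 0.

Definition alpha_out (a : V -> V -> R) (v : V) : R :=
  if [pick w | e v w] is Some w0 then
    \big[Num.max/a v w0]_(w | e v w) a v w
  else 0.

Definition rhoR (a : V -> V -> R) (v : V) : R :=
  Num.max 0 (alpha_out a v - alpha_in a v).

Definition raise_op (a : V -> V -> R) (v : V) : V -> V -> R :=
  let r := rhoR a v in
  if 0 < r then
    fun x y =>
      if (y == v) && (x != v) && e x y then a x y + r / 2
      else if (x == v) && (y != v) && e x y then a x y - r / 2
      else a x y
  else a.

(* State after t raising operations along the sequence s, starting from a:
   (current graph function, cumulative raise vector r(t)). *)
Fixpoint raise_state (a : V -> V -> R) (s : nat -> V) (t : nat)
  : (V -> V -> R) * (V -> R) :=
  match t with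
  | 0%N => (a, fun _ => 0)
  | t'.+1 =>
      let st := raise_state a s t' in
      let v := s t' in
      let r := rhoR st.1 v in
      (raise_op st.1 v,
       fun x => st.2 x + (if (x == v) && (0 < r) then r / 2 else 0))
  end.

Definition cum_raise (a : V -> V -> R) (s : nat -> V) (t : nat) (v : V) : R :=
  (raise_state a s t).2 v.

End GraphFun.

Definition every_vertex_inf_often (V : finType) (s : nat -> V) : Prop :=
  forall (v : V) (N : nat), exists2 t : nat, (N <= t)%N & s t = v.

From HB Require Import structures.
From mathcomp Require Import all_boot all_order all_algebra.
From mathcomp Require Import all_classical all_reals all_analysis.
From mathcomp Require Import lra.

Set Implicit Arguments.
Unset Strict Implicit.
Unset Printing Implicit Defensive.
Import Order.TTheory GRing.Theory Num.Theory.
Import numFieldNormedType.Exports.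
Local Open Scope classical_set_scope.
Local Open Scope ring_scope.

(** Proof idea: after [t] operations the graph function is the reweighting
    [a x y + r_t y - r_t x] of [a] by the cumulative raises.  Whenever [v] is
    operated on, [r_v] grows by at least half of [alpha_v^out - alpha_v^in];
    since [r_v(t)] converges and [v] is visited infinitely often, the limit
    reweighting by [r*] satisfies [alpha_v^out <= alpha_v^in].  Comparing an
    edge [(v,w)] realising [alpha_v^out] for [a] with an edge [(u,v)] realising
    [alpha_v^in] for the limit reweighting gives the inequality. *)

Section GraphFunction.
Variables (R : realType) (V : finType) (e : rel V).

Definition reweight (a : V -> V -> R) (r : V -> R) : V -> V -> R :=
  fun x y => a x y + r y - r x.

Lemma le_alpha_in (b : V -> V -> R) u v : e u v -> b u v <= alpha_in e b v.
Proof.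
move=> huv; rewrite /alpha_in; case: pickP => [u0 _|/(_ u)]; last by rewrite huv.
exact: le_bigmax_cond.
Qed.

Lemma le_alpha_out (b : V -> V -> R) v w : e v w -> b v w <= alpha_out e b v.
Proof.
move=> hvw; rewrite /alpha_out; case: pickP => [w0 _|/(_ w)]; last by rewrite hvw.
exact: le_bigmax_cond.
Qed.

Lemma alpha_in_attained (b : V -> V -> R) u v :
  e u v -> exists2 u', e u' v & alpha_in e b v = b u' v.
Proof.
move=> huv; rewrite /alpha_in; case: pickP => [u0 hu0|/(_ u)]; last by rewrite huv.
have [u' hu' u'_max] := @arg_maxP _ _ _ _ (fun x => e x v) (fun x => b x v) hu0.
exists u' => //; apply/eqP; rewrite eq_le le_bigmax_cond // andbT.
by apply/bigmax_leP; split; [exact: u'_max | exact: u'_max].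
Qed.

Lemma alpha_out_attained (b : V -> V -> R) v w :
  e v w -> exists2 w', e v w' & alpha_out e b v = b v w'.
Proof.
move=> hvw; rewrite /alpha_out; case: pickP => [w0 hw0|/(_ w)]; last by rewrite hvw.
have [w' hw' w'_max] := arg_maxP (fun x => b v x) hw0.
exists w' => //; apply/eqP; rewrite eq_le le_bigmax_cond // andbT.
by apply/bigmax_leP; split => //; apply: w'_max.
Qed.

Lemma alpha_in_le_shift (b b' : V -> V -> R) (c : R) u v : e u v ->
  (forall x, e x v -> b x v <= b' x v + c) -> alpha_in e b v <= alpha_in e b' v + c.
Proof.
move=> huv bb'; have [u' hu' ->] := alpha_in_attained b huv.
by apply: le_trans (bb' _ hu') _; rewrite lerD2r le_alpha_in.
Qed.

Lemma alpha_in_alpha_out_eq0 (b : V -> V -> R) v :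
  (forall x, ~~ e x v) -> (forall x, ~~ e v x) -> alpha_out e b v - alpha_in e b v = 0.
Proof.
move=> no_in no_out; rewrite /alpha_out /alpha_in.
case: pickP => [w hw|_]; first by rewrite (negbTE (no_out w)) in hw.
by case: pickP => [u hu|_]; [rewrite (negbTE (no_in u)) in hu | rewrite subrr].
Qed.

Lemma rhoR_gt0E (b : V -> V -> R) v :
  0 < rhoR e b v -> rhoR e b v = alpha_out e b v - alpha_in e b v.
Proof. by rewrite /rhoR lt_max ltxx /= => /ltW /max_idPr. Qed.

Lemma connect_neq_out x y : connect e x y -> x != y -> exists w, e x w.
Proof.
move=> /connectP [[|z p]] /=; first by move=> _ -> /eqP.
by move=> /andP [exz _] _ _; exists z.
Qed.

Lemma connect_neq_in x y : connect e x y -> x != y -> exists u, e u y.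
Proof.
move=> /connectP [p]; elim/last_ind: p => [|p z _] /=; first by move=> _ -> /eqP.
by rewrite rcons_path last_rcons => /andP [_ ezy] -> _; exists (last x p).
Qed.

Lemma strongly_connected_in_out v : strongly_connected e ->
  (exists x, e x v \/ e v x) -> (exists u, e u v) /\ (exists w, e v w).
Proof.
move=> sc [x]; have [<-|xv] := eqVneq x v; first by case=> exx; split; exists x.
case=> [exv|evx]; split.
- by exists x.
- by apply: connect_neq_out (sc v x) _; rewrite eq_sym.
- exact: connect_neq_in (sc x v) xv.
- by exists x.
Qed.

Lemma rhoR_gt0_in_out (b : V -> V -> R) v : strongly_connected e ->
  0 < rhoR e b v -> (exists u, e u v) /\ (exists w, e v w).
Proof.
move=> sc rho_gt0; apply: strongly_connected_in_out => //.
case: (pickP (fun x => e x v || e v x)) => [x /orP hx|isolated]; first by exists x.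
have := rho_gt0; rewrite (rhoR_gt0E rho_gt0) alpha_in_alpha_out_eq0 ?ltxx // => x;
  by move: (isolated x) => /norP [].
Qed.

Variables (a : V -> V -> R) (s : nat -> V).

Lemma raise_state_reweight t x y : e x y ->
  (raise_state e a s t).1 x y = reweight a (cum_raise e a s t) x y.
Proof.
rewrite /reweight /cum_raise => exy; elim: t => [|t IH] /=; first by rewrite addr0 subr0.
set st := raise_state e a s t; rewrite /raise_op /=.
case: ifP => _; last by rewrite !andbF !addr0 IH.
rewrite exy !andbT IH -/st.
by have [->|yv] := eqVneq y (s t); have [->|xv] := eqVneq x (s t);
  rewrite ?eqxx ?(negbTE yv) ?(negbTE xv) /=; lra.
Qed.

Lemma cum_raise_step t :
  alpha_out e (raise_state e a s t).1 (s t) - alpha_in e (raise_state e a s t).1 (s t)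
  <= 2 * (cum_raise e a s t.+1 (s t) - cum_raise e a s t (s t)).
Proof.
rewrite /cum_raise /= eqxx /=; set b := (raise_state e a s t).1.
have rho_ge : alpha_out e b (s t) - alpha_in e b (s t) <= rhoR e b (s t).
  by rewrite /rhoR le_max lexx orbT.
case: ifP => [_|]; first lra.
by move/negbT; rewrite -leNgt; lra.
Qed.

(* If a raise at [v] could still move [r_v] by a definite amount, [r_v(t)]
   would not be Cauchy. *)
Lemma limit_reweight_balanced (rstar : V -> R) v u0 w :
  every_vertex_inf_often s ->
  (forall x, (fun t => cum_raise e a s t x) @ \oo --> rstar x) ->
  e u0 v -> e v w ->
  reweight a rstar v w <= alpha_in e (reweight a rstar) v.
Proof.
move=> inf_often r_cvg eu0v evw; apply/ler_addgt0Pr => eps eps_gt0.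
have d_gt0 : 0 < eps / 8 by rewrite divr_gt0.
have : \forall t \near \oo, forall x, `|rstar x - cum_raise e a s t x| < eps / 8.
  by apply: filter_forall => x; exact: (cvgrPdist_lt _ _).1 (r_cvg x) _ d_gt0.
move=> [N _ near_r]; have [t tN stv] := inf_often v N.
have close t' x : (N <= t')%N -> `|rstar x - cum_raise e a s t' x| < eps / 8.
  by move=> t'N; apply: near_r.
pose b := (raise_state e a s t).1.
have b_rw x y : e x y -> b x y = reweight a (cum_raise e a s t) x y.
  exact: raise_state_reweight.
have in_b : alpha_in e b v <= alpha_in e (reweight a rstar) v + 2 * (eps / 8).
  apply: alpha_in_le_shift eu0v _ => x exv; rewrite b_rw // /reweight.
  by move: (close t x tN) (close t v tN); rewrite !ltr_norml; lra.
have out_b := le_alpha_out b evw; rewrite b_rw // /reweight in out_b.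
have step := cum_raise_step t; rewrite stv -/b in step.
rewrite {1}/reweight.
move: (close t v tN) (close t w tN) (close t.+1 v (leqW tN)); rewrite !ltr_norml; lra.
Qed.

End GraphFunction.

Theorem lemma4 (R : realType) (V : finType) (e : rel V)
    (a : V -> V -> R) (s : nat -> V) (rstar : V -> R) :
  strongly_connected e ->
  every_vertex_inf_often s ->
  (forall x : V, (fun t => cum_raise e a s t x) @ \oo --> rstar x) ->
  forall v : V, 0 < rhoR e a v ->
  exists u w : V,
    [/\ e u v, e v w &
        - rstar v + rhoR e a v / 2 <= (- rstar u + - rstar w) / 2].
Proof.
move=> sc inf_often r_cvg v rho_gt0.
have [[u0 eu0v] [w0 evw0]] := rhoR_gt0_in_out sc rho_gt0.
have [w evw out_a] := alpha_out_attained a evw0.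
have [u euv in_lim] := alpha_in_attained (reweight a rstar) eu0v.
have balanced := limit_reweight_balanced inf_often r_cvg eu0v evw.
have in_a := le_alpha_in a euv.
exists u, w; split => //.
move: balanced; rewrite (rhoR_gt0E rho_gt0) out_a in_lim /reweight; lra.
Qed.
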